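(* (i) If $\Gamma\vdash M:\mathbb{N}$ in ${\mathrm{PCF}}^\Omega$, then $[\![C_f\,M]\!]_\Gamma=[\![M]\!]_\Gamma[i\mapsto f(i)]$ (where $f(i)$ is read as $\bot$ when $i\notin\mathrm{dom}\,f$); similarly $[\![\mathit{suc}\,M]\!]_\Gamma=[\![M]\!]_\Gamma[i\mapsto i+1]$ and $[\![\mathit{pre}\,M]\!]_\Gamma=[\![M]\!]_\Gamma[0\mapsto 0, i+1\mapsto i]$. (ii) If $\Gamma\vdash M:\mathbb{N}$, $\Gamma\vdash N:\mathbb{N}$ and $\Gamma\vdash P:\mathbb{N}$ in ${\mathrm{PCF}}^\Omega$, then $[\![\mathit{ifzero}\,M\,N\,P]\!]_\Gamma=[\![M]\!]_\Gamma[0\mapsto d,\ i+1\mapsto e]$ where $[\![N]\!]_\Gamma=\lambda.d$ and $[\![P]\!]_\Gamma=\lambda.e$.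
   Context: ${\mathrm{PCF}}^\Omega$ is the simply typed $\lambda$-calculus over the base type $\mathbb{N}$ with constants $\underline{n}$, $\mathit{suc},\mathit{pre}:\mathbb{N}\rightarrow\mathbb{N}$, $\mathit{ifzero}:\mathbb{N}\rightarrow\mathbb{N}\rightarrow\mathbb{N}\rightarrow\mathbb{N}$, $Y_\sigma$ for every type $\sigma$, and $C_f:\mathbb{N}\rightarrow\mathbb{N}$ for each partial $f:\mathbb{N}\rightharpoonup\mathbb{N}$. NSPs: coinductively generated well-typed trees $p::=\lambda\vec x.e$, $e::=\bot\mid n\mid\mathtt{case}\ a\ \mathtt{of}\ (i\Rightarrow e_i\mid i\in\mathbb{N})$, $a::=x\,q_0\cdots q_{r-1}$, modulo $\alpha$. Meta-terms additionally allow $P\vec Q$ and $\mathtt{case}\ G\ \mathtt{of}(\ldots)$ for arbitrary ground $G$; evaluation $\langle\!\langle-\rangle\!\rangle$ is the limit of reduction by $\beta$, $\mathtt{case}\ \bot\ \mathtt{of}(\ldots)\rightsquigarrow\bot$, $\mathtt{case}\ n\ \mathtt{of}(i\Rightarrow E_i)\rightsquigarrow E_n$ and case-of-case commutation. Application: $(\lambda x_0\cdots x_r.e)\cdot q=\lambda x_1\cdots x_r.\langle\!\langle e[x_0\mapsto q]\rangle\!\rangle$; $x^\eta=\lambda\vec z.\mathtt{case}\ x\vec z^{\,\eta}\ \mathtt{of}\ (i\Rightarrow i)$. The interpretation $\Gamma\vdash[\![M]\!]_\Gamma$ of ${\mathrm{PCF}}^\Omega$ terms in NSPs: $[\![x]\!]=x^\eta$,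 $[\![\underline n]\!]=\lambda.n$, $[\![\mathit{suc}]\!]=\lambda x.\mathtt{case}\ x\ \mathtt{of}\ (i\Rightarrow i+1)$, $[\![\mathit{pre}]\!]=\lambda x.\mathtt{case}\ x\ \mathtt{of}\ (0\Rightarrow0\mid i+1\Rightarrow i)$, $[\![\mathit{ifzero}]\!]=\lambda xyz.\mathtt{case}\ x\ \mathtt{of}\ (0\Rightarrow\mathtt{case}\ y\ \mathtt{of}(j\Rightarrow j)\mid i+1\Rightarrow\mathtt{case}\ z\ \mathtt{of}(j\Rightarrow j))$, $[\![C_f]\!]=\lambda x.\mathtt{case}\ x\ \mathtt{of}\ (i\Rightarrow f(i))$, $[\![\lambda x.M]\!]_\Gamma=\lambda x.[\![M]\!]_{\Gamma,x}$, $[\![MN]\!]_\Gamma=[\![M]\!]_\Gamma\cdot[\![N]\!]_\Gamma$ (and $Y_\sigma$ by the standard fixed point procedure). Rightward numeral leaves of a term: $n$ is one in itself; those of $e$ are ones of $\lambda\vec x.e$; those of each $e_i$ are ones of $\mathtt{case}\ a\ \mathtt{of}\ (i\Rightarrow e_i)$. $t[i\mapsto e_i]$ replaces each rightward numeral leaf occurrence $i$ of $t$ by $e_i$ (for the ifzero clause, leaf $0$ by $d$ and leaf $i+1$ by $e$). *)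

(* Variables are de Bruijn indices (this realises "modulo alpha"):
   in a procedure NLam r e (= \x_0 ... x_{r-1}. e) the bound variable x_j has
   index r-1-j inside e, and an index k >= r refers to the outer variable k-r.
   A context Gamma is a list of types whose head is the most recent variable. *)
From Stdlib Require Import Arith List ClassicalEpsilon.

Inductive ty : Type := TN | TArr (s t : ty).

Fixpoint arity (s : ty) : nat :=
  match s with TN => 0 | TArr _ t => S (arity t) end.

Inductive term : Type :=
| tvar (x : nat)
| tnum (n : nat)
| tsuc | tpre | tifz
| tY (s : ty)
| tC (f : nat -> option nat)
| tlam (s : ty) (M : term)
| tapp (M N : term).

Inductive has_type : list ty -> term -> ty -> Prop :=
| ht_var G x s : nth_error G x = Some s -> has_type G (tvar x) s
| ht_num G n : has_type G (tnum n) TN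
| ht_suc G : has_type G tsuc (TArr TN TN)
| ht_pre G : has_type G tpre (TArr TN TN)
| ht_ifz G : has_type G tifz (TArr TN (TArr TN (TArr TN TN)))
| ht_Y G s : has_type G (tY s) (TArr (TArr s s) s)
| ht_C G f : has_type G (tC f) (TArr TN TN)
| ht_lam G s t M : has_type (s :: G) M t -> has_type G (tlam s M) (TArr s t)
| ht_app G s t M N :
    has_type G M (TArr s t) -> has_type G N s -> has_type G (tapp M N) t.

(* NCase x k a br  =  case x (a 0) ... (a (k-1)) of (i => br i) *)
CoInductive nproc : Type := NLam (r : nat) (e : nexp)
with nexp : Type :=
| NBot
| NNum (n : nat)
| NCase (x : nat) (k : nat) (args : nat -> nproc) (br : nat -> nexp).

(* equality of (infinite) NSP trees = bisimilarity (only the first k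
   arguments of an application node are meaningful) *)
CoInductive pbisim : nproc -> nproc -> Prop :=
| pb_lam r e e' : nbisim e e' -> pbisim (NLam r e) (NLam r e')
with nbisim : nexp -> nexp -> Prop :=
| nb_bot : nbisim NBot NBot
| nb_num n : nbisim (NNum n) (NNum n)
| nb_case x k a a' br br' :
    (forall j, j < k -> pbisim (a j) (a' j)) ->
    (forall i, nbisim (br i) (br' i)) ->
    nbisim (NCase x k a br) (NCase x k a' br').

(* MCaseE G br = case G of (i => br i);  MCaseV x k a br = case x Q.. of ...;
   MCaseA P k a br = case (P Q..) of ... *)
CoInductive mproc : Type := MLam (r : nat) (E : mexp)
with mexp : Type :=
| MBot
| MNum (n : nat)
| MCaseE (G : mexp) (br : nat -> mexp)
| MCaseV (x : nat) (k : nat) (args : nat -> mproc) (br : nat -> mexp)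
| MCaseA (P : mproc) (k : nat) (args : nat -> mproc) (br : nat -> mexp).

CoFixpoint embp (p : nproc) : mproc :=
  match p with NLam r e => MLam r (embe e) end
with embe (e : nexp) : mexp :=
  match e with
  | NBot => MBot
  | NNum n => MNum n
  | NCase x k a br => MCaseV x k (fun j => embp (a j)) (fun i => embe (br i))
  end.

Definition liftren (r : nat) (rho : nat -> nat) (k : nat) : nat :=
  if k <? r then k else rho (k - r) + r.

CoFixpoint mrenp (rho : nat -> nat) (P : mproc) : mproc :=
  match P with MLam r E => MLam r (mrene (liftren r rho) E) end
with mrene (rho : nat -> nat) (E : mexp) : mexp :=
  match E with
  | MBot => MBot
  | MNum n => MNum n
  | MCaseE G br => MCaseE (mrene rho G) (fun i => mrene rho (br i))
  | MCaseV x k a br =>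
      MCaseV (rho x) k (fun j => mrenp rho (a j)) (fun i => mrene rho (br i))
  | MCaseA P k a br =>
      MCaseA (mrenp rho P) k (fun j => mrenp rho (a j)) (fun i => mrene rho (br i))
  end.

Inductive mentry : Type := EVar (j : nat) | EProc (P : mproc).

Definition shiftent (r : nat) (en : mentry) : mentry :=
  match en with
  | EVar j => EVar (j + r)
  | EProc P => EProc (mrenp (fun k => k + r) P)
  end.

Definition liftsub (r : nat) (sigma : nat -> mentry) (k : nat) : mentry :=
  if k <? r then EVar k else shiftent r (sigma (k - r)).

CoFixpoint msubp (sigma : nat -> mentry) (P : mproc) : mproc :=
  match P with MLam r E => MLam r (msube (liftsub r sigma) E) end
with msube (sigma : nat -> mentry) (E : mexp) : mexp :=
  match E with
  | MBot => MBot
  | MNum n => MNum n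
  | MCaseE G br => MCaseE (msube sigma G) (fun i => msube sigma (br i))
  | MCaseV x k a br =>
      match sigma x with
      | EVar y => MCaseV y k (fun j => msubp sigma (a j)) (fun i => msube sigma (br i))
      | EProc Q => MCaseA Q k (fun j => msubp sigma (a j)) (fun i => msube sigma (br i))
      end
  | MCaseA P k a br =>
      MCaseA (msubp sigma P) k (fun j => msubp sigma (a j)) (fun i => msube sigma (br i))
  end.

Inductive hstep : mexp -> mexp -> Prop :=
| hs_bot br : hstep (MCaseE MBot br) MBot
| hs_num n br : hstep (MCaseE (MNum n) br) (br n)
| hs_ccE G br1 br2 :
    hstep (MCaseE (MCaseE G br1) br2) (MCaseE G (fun i => MCaseE (br1 i) br2))
| hs_ccV x k a br1 br2 :
    hstep (MCaseE (MCaseV x k a br1) br2) (MCaseV x k a (fun i => MCaseE (br1 i) br2))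
| hs_ccA P k a br1 br2 :
    hstep (MCaseE (MCaseA P k a br1) br2) (MCaseA P k a (fun i => MCaseE (br1 i) br2))
| hs_beta r E k a br :
    hstep (MCaseA (MLam r E) k a br)
          (MCaseE (msube (fun j => if j <? r then EProc (a (r - 1 - j)) else EVar (j - r)) E) br).

Inductive hred : mexp -> mexp -> Prop :=
| hr_refl E : hred E E
| hr_step E1 E2 E3 : hstep E1 E2 -> hred E2 E3 -> hred E1 E3.

(* evaluation <<E>> : the limit of reduction (Boehm-tree style) *)
CoInductive evals : mexp -> nexp -> Prop :=
| ev_bot E : hred E MBot -> evals E NBot
| ev_num E n : hred E (MNum n) -> evals E (NNum n)
| ev_div E : (forall E', hred E E' -> exists E'', hstep E' E'') -> evals E NBot
| ev_case E x k a br a' br' :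
    hred E (MCaseV x k a br) ->
    (forall j, j < k -> evals_proc (a j) (a' j)) ->
    (forall i, evals (br i) (br' i)) ->
    evals E (NCase x k a' br')
with evals_proc : mproc -> nproc -> Prop :=
| ev_lam r E e : evals E e -> evals_proc (MLam r E) (NLam r e).

Definition eval (E : mexp) : nexp := epsilon (inhabits NBot) (fun t => evals E t).

(* NSP application  (\x0 x1..xr. e) . q = \x1..xr. << e[x0 |-> q] >> *)
Definition napp (p q : nproc) : nproc :=
  match p with
  | NLam (S r) e =>
      NLam r (eval (msube (fun k => if k <? r then EVar k
                                    else if k =? r then EProc (mrenp (fun j => j + r) (embp q))
                                    else EVar (k - 1)) (embe e)))
  | NLam 0 _ => p
  end.

(* etaargs s j = z_j^eta, where z_j is the j-th bound variable of \z.. (type s) *)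
Fixpoint etaargs (s : ty) (j : nat) : nproc :=
  match s with
  | TN => NLam 0 NBot
  | TArr s1 s2 =>
      match j with
      | 0 => NLam (arity s1)
               (NCase (arity s2 + arity s1) (arity s1) (etaargs s1) (fun i => NNum i))
      | S j' => etaargs s2 j'
      end
  end.

Definition eta (s : ty) (x : nat) : nproc :=
  NLam (arity s) (NCase (x + arity s) (arity s) (etaargs s) (fun i => NNum i)).

Definition lamcons (p : nproc) : nproc := match p with NLam r e => NLam (S r) e end.

Definition noargs : nat -> nproc := fun _ => NLam 0 NBot.

Fixpoint Ychain (s : ty) (k : nat) : nproc :=
  match k with
  | 0 => NLam (S (arity s)) NBot
  | S k' => let g := eta (TArr s s) 0 in lamcons (napp g (napp (Ychain s k') g))
  end.

Inductive step : Type := SBr (i : nat) | SArg (j : nat) | SBody.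
Inductive lab : Type := LBot | LNum (n : nat) | LCase (x k : nat) | LLam (r : nat).

Fixpoint labe (pi : list step) (e : nexp) : option lab :=
  match pi with
  | nil => Some (match e with NBot => LBot | NNum n => LNum n | NCase x k _ _ => LCase x k end)
  | SBr i :: pi' => match e with NCase _ _ _ br => labe pi' (br i) | _ => None end
  | SArg j :: pi' =>
      match e with NCase _ k a _ => if j <? k then labp pi' (a j) else None | _ => None end
  | SBody :: _ => None
  end
with labp (pi : list step) (p : nproc) : option lab :=
  match pi with
  | nil => match p with NLam r _ => Some (LLam r) end
  | SBody :: pi' => match p with NLam _ e => labe pi' e end
  | _ => None
  end.

Definition is_chain_sup (c : nat -> nproc) (t : nproc) : Prop :=
  forall pi, exists k0, forall k, k0 <= k -> labp pi (c k) = labp pi t.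

Definition Yint (s : ty) : nproc :=
  epsilon (inhabits (NLam 0 NBot)) (is_chain_sup (Ychain s)).

Definition fval (f : nat -> option nat) (i : nat) : nexp :=
  match f i with Some m => NNum m | None => NBot end.

Fixpoint interp (G : list ty) (M : term) : nproc :=
  match M with
  | tvar x => eta (nth x G TN) x
  | tnum n => NLam 0 (NNum n)
  | tsuc => NLam 1 (NCase 0 0 noargs (fun i => NNum (S i)))
  | tpre => NLam 1 (NCase 0 0 noargs (fun i => match i with 0 => NNum 0 | S j => NNum j end))
  | tifz => NLam 3 (NCase 2 0 noargs (fun i => match i with
                     | 0 => NCase 1 0 noargs (fun j => NNum j)
                     | S _ => NCase 0 0 noargs (fun j => NNum j) end))
  | tC f => NLam 1 (NCase 0 0 noargs (fval f))
  | tY s => Yint s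
  | tlam s M => lamcons (interp (s :: G) M)
  | tapp M N => napp (interp G M) (interp G N)
  end.

(* ---------- replacement of rightward numeral leaves t[i |-> g i] ---------- *)
CoFixpoint rple (g : nat -> nexp) (e : nexp) : nexp :=
  match e with
  | NBot => NBot
  | NNum n => g n
  | NCase x k a br => NCase x k a (fun i => rple g (br i))
  end.

Definition rplp (g : nat -> nexp) (p : nproc) : nproc :=
  match p with NLam r e => NLam r (rple g e) end.

(* By induction on typing, [[M]] has exactly as many leading lambdas as the
   arity of the type of M.  For [Y_s] this needs the supremum of the chain
   [Ychain s] to exist: the chain is increasing because application is monotone
   on well-typed NSPs, and the node labels of an increasing chain are eventually
   those of its limit.  Hence a ground M denotes some [\. m].  Then [[C_f M]] is
   the evaluation of [case m of (i => f i)]; as [m] is already normal, case-of-case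
   commutation pushes the outer case down the rightward spine of [m] and turns each
   numeral leaf [i] into [f i], leaving the arguments of [m] untouched.
   [[ifzero M N P]] is three such applications in a row, in which the branches
   [case y of (j => j)] collapse to [d] and [e] once N and P are substituted. *)

From Stdlib Require Import Arith List ClassicalEpsilon Lia FunctionalExtensionality.

Ltac nat_cases :=
  repeat match goal with
  | |- context [?a <? ?b] => let E := fresh "Eb" in destruct (a <? b) eqn:E;
        [apply Nat.ltb_lt in E | apply Nat.ltb_ge in E]
  | |- context [?a =? ?b] => let E := fresh "Eb" in destruct (a =? b) eqn:E;
        [apply Nat.eqb_eq in E | apply Nat.eqb_neq in E]
  end.

Definition frob_np (p : nproc) : nproc := match p with NLam r e => NLam r e end.
Definition frob_ne (e : nexp) : nexp :=
  match e with NBot => NBot | NNum n => NNum n | NCase x k a br => NCase x k a br end.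
Definition frob_mp (p : mproc) : mproc := match p with MLam r e => MLam r e end.
Definition frob_me (e : mexp) : mexp :=
  match e with MBot => MBot | MNum n => MNum n | MCaseE G br => MCaseE G br
  | MCaseV x k a br => MCaseV x k a br | MCaseA P k a br => MCaseA P k a br end.
Lemma frob_np_eq p : p = frob_np p. Proof. destruct p; reflexivity. Qed.
Lemma frob_ne_eq p : p = frob_ne p. Proof. destruct p; reflexivity. Qed.
Lemma frob_mp_eq p : p = frob_mp p. Proof. destruct p; reflexivity. Qed.
Lemma frob_me_eq p : p = frob_me p. Proof. destruct p; reflexivity. Qed.

Lemma embe_bot : embe NBot = MBot. Proof. rewrite (frob_me_eq (embe NBot)); reflexivity. Qed.
Lemma embe_num n : embe (NNum n) = MNum n. Proof. rewrite (frob_me_eq (embe _)); reflexivity. Qed.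
Lemma embe_case x k a br :
  embe (NCase x k a br) = MCaseV x k (fun j => embp (a j)) (fun i => embe (br i)).
Proof. rewrite (frob_me_eq (embe _)); reflexivity. Qed.
Lemma embp_lam r e : embp (NLam r e) = MLam r (embe e).
Proof. rewrite (frob_mp_eq (embp _)); reflexivity. Qed.
Lemma mrenp_lam rho r E : mrenp rho (MLam r E) = MLam r (mrene (liftren r rho) E).
Proof. rewrite (frob_mp_eq (mrenp _ _)); reflexivity. Qed.
Lemma mrene_bot rho : mrene rho MBot = MBot. Proof. rewrite (frob_me_eq (mrene _ _)); reflexivity. Qed.
Lemma mrene_num rho n : mrene rho (MNum n) = MNum n.
Proof. rewrite (frob_me_eq (mrene _ _)); reflexivity. Qed.
Lemma mrene_caseE rho G br : mrene rho (MCaseE G br) = MCaseE (mrene rho G) (fun i => mrene rho (br i)).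
Proof. rewrite (frob_me_eq (mrene _ _)); reflexivity. Qed.
Lemma mrene_caseV rho x k a br : mrene rho (MCaseV x k a br) =
  MCaseV (rho x) k (fun j => mrenp rho (a j)) (fun i => mrene rho (br i)).
Proof. rewrite (frob_me_eq (mrene _ _)); reflexivity. Qed.
Lemma mrene_caseA rho P k a br : mrene rho (MCaseA P k a br) =
  MCaseA (mrenp rho P) k (fun j => mrenp rho (a j)) (fun i => mrene rho (br i)).
Proof. rewrite (frob_me_eq (mrene _ _)); reflexivity. Qed.
Lemma msubp_lam s r E : msubp s (MLam r E) = MLam r (msube (liftsub r s) E).
Proof. rewrite (frob_mp_eq (msubp _ _)); reflexivity. Qed.
Lemma msube_bot s : msube s MBot = MBot. Proof. rewrite (frob_me_eq (msube _ _)); reflexivity. Qed.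
Lemma msube_num s n : msube s (MNum n) = MNum n.
Proof. rewrite (frob_me_eq (msube _ _)); reflexivity. Qed.
Lemma msube_caseE s G br : msube s (MCaseE G br) = MCaseE (msube s G) (fun i => msube s (br i)).
Proof. rewrite (frob_me_eq (msube _ _)); reflexivity. Qed.
Lemma msube_caseV s x k a br : msube s (MCaseV x k a br) =
  match s x with
  | EVar y => MCaseV y k (fun j => msubp s (a j)) (fun i => msube s (br i))
  | EProc Q => MCaseA Q k (fun j => msubp s (a j)) (fun i => msube s (br i))
  end.
Proof. rewrite (frob_me_eq (msube _ _)); simpl; destruct (s x); reflexivity. Qed.
Lemma msube_caseA s P k a br : msube s (MCaseA P k a br) =
  MCaseA (msubp s P) k (fun j => msubp s (a j)) (fun i => msube s (br i)).
Proof. rewrite (frob_me_eq (msube _ _)); reflexivity. Qed.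
Lemma rple_bot g : rple g NBot = NBot. Proof. rewrite (frob_ne_eq (rple _ _)); reflexivity. Qed.
Lemma rple_num g n : rple g (NNum n) = g n.
Proof. rewrite (frob_ne_eq (rple _ _)); simpl; destruct (g n); reflexivity. Qed.
Lemma rple_case g x k a br : rple g (NCase x k a br) = NCase x k a (fun i => rple g (br i)).
Proof. rewrite (frob_ne_eq (rple _ _)); reflexivity. Qed.

(** * Head reduction and evaluation *)

Definition hnf (E : mexp) : Prop :=
  match E with MBot | MNum _ | MCaseV _ _ _ _ => True | _ => False end.

Lemma hnf_nostep E E' : hnf E -> ~ hstep E E'.
Proof. intros H S; inversion S; subst; simpl in H; auto. Qed.

Lemma hnf_or_step E : ~ hnf E -> exists E', hstep E E'.
Proof.
  destruct E; simpl; try tauto; intros _.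
  - destruct E; eexists; constructor.
  - destruct P; eexists; constructor.
Qed.

Lemma hstep_det E E1 E2 : hstep E E1 -> hstep E E2 -> E1 = E2.
Proof. intros H1 H2; inversion H1; subst; inversion H2; subst; reflexivity. Qed.

Lemma hred_trans E1 E2 E3 : hred E1 E2 -> hred E2 E3 -> hred E1 E3.
Proof. induction 1; intros; auto. econstructor; eauto. Qed.

Lemma hred_to_hnf E X Y : hred E X -> hred E Y -> hnf Y -> hred X Y.
Proof.
  intros H; revert Y; induction H; intros Y HY Hn; auto.
  inversion HY; subst.
  - exfalso; eapply hnf_nostep; eauto.
  - apply IHhred; auto. rewrite (hstep_det _ _ _ H H1); auto.
Qed.

Lemma hred_hnf_unique E X Y : hred E X -> hred E Y -> hnf X -> hnf Y -> X = Y.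
Proof.
  intros H1 H2 Hx Hy. pose proof (hred_to_hnf _ _ _ H1 H2 Hy) as H.
  destruct H as [|A B C S _]. reflexivity. exfalso; exact (hnf_nostep _ _ Hx S).
Qed.

Lemma hred_hnf_no_divergence E X : hred E X -> hnf X ->
  (forall E', hred E E' -> exists E'', hstep E' E'') -> False.
Proof. intros H Hn D. destruct (D X H) as [E'' S]. eapply hnf_nostep; eauto. Qed.

Lemma evals_hstep_back E E2 t : hstep E E2 -> evals E2 t -> evals E t.
Proof.
  intros S H. inversion H; subst.
  - apply ev_bot. econstructor; eauto.
  - apply ev_num. econstructor; eauto.
  - apply ev_div. intros E' HE'. inversion HE'; subst.
    + eauto.
    + apply H0. rewrite (hstep_det _ _ _ S H1); auto.
  - eapply ev_case; eauto. econstructor; eauto.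
Qed.

Lemma evals_unique : forall E t1 t2, evals E t1 -> evals E t2 -> nbisim t1 t2.
Proof.
  cofix IH. intros E t1 t2 H1 H2.
  destruct H1 as [E H1|E n H1|E H1|E x k a br a1 br1 Hr Ha Hb].
  - destruct H2 as [E H2|E n H2|E H2|E x k a br a2 br2 Hr Ha Hb].
    + constructor.
    + pose proof (hred_hnf_unique _ _ _ H1 H2 I I); discriminate.
    + constructor.
    + pose proof (hred_hnf_unique _ _ _ H1 Hr I I); discriminate.
  - destruct H2 as [E H2|E m H2|E H2|E x k a br a2 br2 Hr Ha Hb].
    + pose proof (hred_hnf_unique _ _ _ H1 H2 I I); discriminate.
    + pose proof (hred_hnf_unique _ _ _ H1 H2 I I) as HH. injection HH as ->. constructor.
    + exfalso; eapply hred_hnf_no_divergence; eauto. exact I.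
    + pose proof (hred_hnf_unique _ _ _ H1 Hr I I); discriminate.
  - destruct H2 as [E H2|E m H2|E H2|E x k a br a2 br2 Hr Ha Hb].
    + constructor.
    + exfalso; eapply hred_hnf_no_divergence; eauto. exact I.
    + constructor.
    + exfalso; eapply hred_hnf_no_divergence; eauto. exact I.
  - destruct H2 as [E H2|E m H2|E H2|E x' k' a' br' a2 br2 Hr' Ha' Hb'].
    + pose proof (hred_hnf_unique _ _ _ Hr H2 I I); discriminate.
    + pose proof (hred_hnf_unique _ _ _ Hr H2 I I); discriminate.
    + exfalso; eapply hred_hnf_no_divergence; eauto. exact I.
    + pose proof (hred_hnf_unique _ _ _ Hr Hr' I I) as HH. injection HH as -> -> -> ->.
      constructor.
      * intros j Hj. specialize (Ha j Hj). specialize (Ha' j Hj).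
        destruct Ha as [r E1 e1 He1]. inversion Ha' as [r' E2 e2 He2]; subst.
        constructor. exact (IH _ _ _ He1 He2).
      * intros i. exact (IH _ _ _ (Hb i) (Hb' i)).
Qed.

Lemma eval_bisim_evals E t : evals E t -> nbisim (eval E) t.
Proof.
  intros H. unfold eval. apply (evals_unique E); auto.
  apply epsilon_spec. eauto.
Qed.

(** * Bisimilarity, renaming and leaf replacement *)

Lemma nbisim_refl : forall e, nbisim e e.
Proof.
  cofix IH. intros e. destruct e as [|n|x k a br]; constructor.
  - intros j _. destruct (a j) as [r e]. constructor. apply IH.
  - intros i. apply IH.
Qed.
Lemma pbisim_refl p : pbisim p p.
Proof. destruct p; constructor; apply nbisim_refl. Qed.

Lemma nbisim_trans : forall e1 e2 e3, nbisim e1 e2 -> nbisim e2 e3 -> nbisim e1 e3.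
Proof.
  cofix IH. intros e1 e2 e3 H1 H2. destruct H1 as [| |x k a a' br br' Ha Hb].
  - inversion H2; constructor.
  - inversion H2; constructor.
  - inversion H2 as [| |x2 k2 a2 a3 br2 br3 Ha2 Hb2]; subst. constructor.
    + intros j Hj. specialize (Ha j Hj). specialize (Ha2 j Hj).
      destruct Ha as [r e e' He]. inversion Ha2 as [r2 e2 e3 He2]; subst.
      constructor. eapply IH; eauto.
    + intros i. eapply IH; eauto.
Qed.

CoFixpoint nren (rho : nat -> nat) (e : nexp) : nexp :=
  match e with
  | NBot => NBot
  | NNum n => NNum n
  | NCase x k a br => NCase (rho x) k (fun j => nrenp rho (a j)) (fun i => nren rho (br i))
  end
with nrenp (rho : nat -> nat) (p : nproc) : nproc :=
  match p with NLam r e => NLam r (nren (liftren r rho) e) end.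

Lemma nren_bot rho : nren rho NBot = NBot. Proof. rewrite (frob_ne_eq (nren _ _)); reflexivity. Qed.
Lemma nren_num rho n : nren rho (NNum n) = NNum n.
Proof. rewrite (frob_ne_eq (nren _ _)); reflexivity. Qed.
Lemma nren_case rho x k a br : nren rho (NCase x k a br) =
  NCase (rho x) k (fun j => nrenp rho (a j)) (fun i => nren rho (br i)).
Proof. rewrite (frob_ne_eq (nren _ _)); reflexivity. Qed.
Lemma nrenp_lam rho r e : nrenp rho (NLam r e) = NLam r (nren (liftren r rho) e).
Proof. rewrite (frob_np_eq (nrenp _ _)); reflexivity. Qed.

Lemma liftren_id r rho : (forall x, rho x = x) -> forall x, liftren r rho x = x.
Proof. intros H x. unfold liftren. destruct (x <? r) eqn:E; auto. apply Nat.ltb_ge in E. rewrite H. lia. Qed.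

Lemma nren_id_bisim : forall e rho, (forall x, rho x = x) -> nbisim (nren rho e) e.
Proof.
  cofix IH. intros e rho H. destruct e as [|n|x k a br].
  - rewrite nren_bot; constructor.
  - rewrite nren_num; constructor.
  - rewrite nren_case, H. constructor.
    + intros j _. destruct (a j) as [r e]. rewrite nrenp_lam. constructor. apply IH.
      apply liftren_id; auto.
    + intros i. apply IH; auto.
Qed.

Lemma rple_cong : forall g g' w w', nbisim w w' -> (forall i, nbisim (g i) (g' i)) ->
  nbisim (rple g w) (rple g' w').
Proof.
  cofix IH. intros g g' w w' H Hg. destruct H as [| n|x k a a' br br' Ha Hb].
  - rewrite !rple_bot; constructor.
  - rewrite !rple_num; auto.
  - rewrite !rple_case. constructor; auto.
Qed.

Lemma rple_numerals_bisim : forall w, nbisim (rple (fun i => NNum i) w) w.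
Proof.
  cofix IH. intros w. destruct w as [|n|x k a br].
  - rewrite rple_bot; constructor.
  - rewrite rple_num; constructor.
  - rewrite rple_case; constructor; auto. intros j _; apply pbisim_refl.
Qed.

(** * Meta-terms in normal form *)

(* [nfrel E e]: [E] is redex-free and has the shape of [e]; as in [nbisim], the
   arguments beyond the arity of an application node are unconstrained. *)
CoInductive nfrel : mexp -> nexp -> Prop :=
| nr_bot : nfrel MBot NBot
| nr_num n : nfrel (MNum n) (NNum n)
| nr_case x k a br a0 br0 :
    (forall j, j < k -> nfrelp (a j) (a0 j)) -> (forall i, nfrel (br i) (br0 i)) ->
    nfrel (MCaseV x k a br) (NCase x k a0 br0)
with nfrelp : mproc -> nproc -> Prop :=
| nrp_lam r E e : nfrel E e -> nfrelp (MLam r E) (NLam r e).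

Lemma nfrel_evals : forall X v, nfrel X v -> evals X v.
Proof.
  cofix IH. intros X v H. destruct H as [|n|x k a br a0 br0 Ha Hb].
  - apply ev_bot; constructor.
  - apply ev_num; constructor.
  - eapply ev_case. constructor.
    + intros j Hj. destruct (Ha j Hj) as [r E e He]. constructor. apply IH; auto.
    + intros i. apply IH; auto.
Qed.

Lemma nfrelp_evals P p : nfrelp P p -> evals_proc P p.
Proof. intros H; destruct H; constructor; apply nfrel_evals; auto. Qed.

Lemma liftsub_liftren_var r rho sigma tau : (forall x, sigma (rho x) = EVar (tau x)) ->
  forall x, liftsub r sigma (liftren r rho x) = EVar (liftren r tau x).
Proof.
  intros H x. unfold liftsub, liftren. destruct (x <? r) eqn:E.
  - rewrite E. reflexivity.
  - assert (E2 : (rho (x - r) + r <? r) = false) by (apply Nat.ltb_ge; lia).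
    rewrite E2. replace (rho (x - r) + r - r) with (rho (x - r)) by lia.
    rewrite H. reflexivity.
Qed.

Lemma nfrel_subst_ren : forall u v rho sigma tau, nbisim u v ->
  (forall x, sigma (rho x) = EVar (tau x)) ->
  nfrel (msube sigma (mrene rho (embe u))) (nren tau v).
Proof.
  cofix IH. intros u v rho sigma tau H Hc. destruct H as [| n|x k a a' br br' Ha Hb].
  - rewrite embe_bot, mrene_bot, msube_bot, nren_bot; constructor.
  - rewrite embe_num, mrene_num, msube_num, nren_num; constructor.
  - rewrite embe_case, mrene_caseV, msube_caseV, Hc, nren_case. constructor.
    + intros j Hj. cbv beta. pose proof (Ha j Hj) as Hj'. revert Hj'.
      destruct (a j) as [r e]; destruct (a' j) as [r' e']; intros Hj'.
      inversion Hj' as [r2 e2 e3 He]; subst.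
      rewrite embp_lam, mrenp_lam, msubp_lam, nrenp_lam. constructor.
      apply IH; auto. apply liftsub_liftren_var; auto.
    + intros i. apply IH; auto.
Qed.

Lemma nfrel_subst : forall u v rho sigma tau, nbisim u (nren rho v) ->
  (forall x, sigma (rho x) = EVar (tau x)) ->
  nfrel (msube sigma (embe u)) (nren tau v).
Proof.
  cofix IH. intros u v rho sigma tau H Hc. destruct v as [|n|x k a br].
  - rewrite nren_bot in H. inversion H; subst. rewrite embe_bot, msube_bot, nren_bot; constructor.
  - rewrite nren_num in H. inversion H; subst. rewrite embe_num, msube_num, nren_num; constructor.
  - rewrite nren_case in H. inversion H as [| |x2 k2 au a2 bu b2 Ha Hb]; subst.
    rewrite embe_case, msube_caseV, Hc, nren_case. constructor.
    + intros j Hj. cbv beta. pose proof (Ha j Hj) as Hj'. revert Hj'.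
      destruct (au j) as [r e]; destruct (a j) as [r' e']; rewrite nrenp_lam; intros Hj'.
      inversion Hj' as [r2 e2 e3 He]; subst.
      rewrite embp_lam, msubp_lam, nrenp_lam. constructor.
      eapply IH; eauto. apply liftsub_liftren_var; auto.
    + intros i. eapply IH; eauto.
Qed.

Lemma evals_case_nfrel : forall X v br g, nfrel X v -> (forall n, evals (br n) (g n)) ->
  evals (MCaseE X br) (rple g v).
Proof.
  cofix IH. intros X v br g H Hg. destruct H as [|n|x k a br1 a0 br0 Ha Hb].
  - rewrite rple_bot. apply ev_bot. econstructor. constructor. constructor.
  - rewrite rple_num. eapply evals_hstep_back. constructor. auto.
  - rewrite rple_case. eapply ev_case.
    + econstructor. constructor. constructor.
    + intros j Hj. apply nfrelp_evals; auto.
    + intros i. apply IH; auto.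
Qed.

Lemma evals_subst_rple sigma rho tau h g :
  (forall x, sigma (rho x) = EVar (tau x)) ->
  (forall n u', nbisim u' (h n) -> evals (msube sigma (embe u')) (g n)) ->
  forall m u, nbisim u (rple h (nren rho m)) -> evals (msube sigma (embe u)) (rple g (nren tau m)).
Proof.
  intros Hc Hl. cofix IH. intros m u H. destruct m as [|n|x k a br].
  - rewrite nren_bot, rple_bot in H. inversion H; subst.
    rewrite embe_bot, msube_bot, nren_bot, rple_bot. apply ev_bot; constructor.
  - rewrite nren_num, rple_num in H. rewrite nren_num, rple_num. auto.
  - rewrite nren_case, rple_case in H. inversion H as [| |x2 k2 au a2 bu b2 Ha Hb]; subst.
    rewrite embe_case, msube_caseV, Hc, nren_case, rple_case. eapply ev_case.
    + constructor.
    + intros j Hj. cbv beta. pose proof (Ha j Hj) as Hj'. revert Hj'.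
      destruct (au j) as [r e]; destruct (a j) as [r' e']; rewrite nrenp_lam; intros Hj'.
      inversion Hj' as [r2 e2 e3 He]; subst.
      rewrite embp_lam, msubp_lam, nrenp_lam. constructor. apply nfrel_evals.
      eapply nfrel_subst; eauto. apply liftsub_liftren_var; auto.
    + intros i. apply IH; auto.
Qed.

(** * Typing and subject reduction *)

Fixpoint argty (s : ty) (j : nat) : ty :=
  match s with TN => TN | TArr s1 s2 => match j with 0 => s1 | S j' => argty s2 j' end end.

(* The context under the binders of a procedure of type [s]: index [i < arity s]
   is the bound variable x_(arity s - 1 - i), as in the de Bruijn convention of
   [NLam]. *)
Definition ctx_ext (s : ty) (G : nat -> ty) (i : nat) : ty :=
  if i <? arity s then argty s (arity s - 1 - i) else G (i - arity s).

Definition tcons (a : ty) (G : nat -> ty) : nat -> ty :=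
  fun n => match n with 0 => a | S n => G n end.

CoInductive ptyp : (nat -> ty) -> nproc -> ty -> Prop :=
| pt_lam G r e s : r = arity s -> etyp (ctx_ext s G) e -> ptyp G (NLam r e) s
with etyp : (nat -> ty) -> nexp -> Prop :=
| et_bot G : etyp G NBot
| et_num G n : etyp G (NNum n)
| et_case G x k a br : k = arity (G x) ->
    (forall j, j < k -> ptyp G (a j) (argty (G x) j)) -> (forall i, etyp G (br i)) ->
    etyp G (NCase x k a br).

CoInductive mptyp : (nat -> ty) -> mproc -> ty -> Prop :=
| mpt_lam G r E s : r = arity s -> metyp (ctx_ext s G) E -> mptyp G (MLam r E) s
with metyp : (nat -> ty) -> mexp -> Prop :=
| mt_bot G : metyp G MBot
| mt_num G n : metyp G (MNum n)
| mt_caseE G E br : metyp G E -> (forall i, metyp G (br i)) -> metyp G (MCaseE E br)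
| mt_caseV G x k a br : k = arity (G x) ->
    (forall j, j < k -> mptyp G (a j) (argty (G x) j)) -> (forall i, metyp G (br i)) ->
    metyp G (MCaseV x k a br)
| mt_caseA G P s k a br : mptyp G P s -> k = arity s ->
    (forall j, j < k -> mptyp G (a j) (argty s j)) -> (forall i, metyp G (br i)) ->
    metyp G (MCaseA P k a br).

Lemma embe_typ : forall G e, etyp G e -> metyp G (embe e).
Proof.
  cofix IH. intros G e H. destruct H as [G|G n|G x k a br Hk Ha Hb].
  - rewrite embe_bot; constructor.
  - rewrite embe_num; constructor.
  - rewrite embe_case. constructor; auto.
    intros j Hj. cbv beta. destruct (Ha j Hj) as [G' r e s Hr He].
    rewrite embp_lam. constructor; auto.
Qed.

Lemma ctx_ext_liftren s G D rho : (forall x, G (rho x) = D x) ->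
  forall x, ctx_ext s G (liftren (arity s) rho x) = ctx_ext s D x.
Proof.
  intros H x. unfold ctx_ext, liftren. destruct (x <? arity s) eqn:E.
  - rewrite E. reflexivity.
  - assert (E2 : (rho (x - arity s) + arity s <? arity s) = false) by (apply Nat.ltb_ge; lia).
    rewrite E2. replace (rho (x - arity s) + arity s - arity s) with (rho (x - arity s)) by lia. auto.
Qed.

Lemma mrene_typ : forall D E, metyp D E -> forall G rho, (forall x, G (rho x) = D x) ->
  metyp G (mrene rho E).
Proof.
  cofix IH. intros D E H G rho Hc.
  destruct H as [D|D n|D E br HE Hb|D x k a br Hk Ha Hb|D P s k a br HP Hk Ha Hb].
  - rewrite mrene_bot; constructor.
  - rewrite mrene_num; constructor.
  - rewrite mrene_caseE; constructor; eauto.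
  - rewrite mrene_caseV; constructor; [rewrite Hc; auto| |eauto].
    intros j Hj. cbv beta. rewrite Hc. destruct (Ha j Hj) as [D' r E s Hr HE].
    rewrite mrenp_lam. constructor; auto. subst r. eapply IH; [exact HE|]. apply ctx_ext_liftren; auto.
  - rewrite mrene_caseA. apply mt_caseA with (s := s); eauto.
    + destruct HP as [D' r E s Hr HE]. rewrite mrenp_lam. constructor; auto. subst r.
      eapply IH; [exact HE|]. apply ctx_ext_liftren; auto.
    + intros j Hj. cbv beta. destruct (Ha j Hj) as [D' r E s' Hr HE].
      rewrite mrenp_lam. constructor; auto. subst r. eapply IH; [exact HE|]. apply ctx_ext_liftren; auto.
Qed.

Lemma mrenp_typ D P s G rho : mptyp D P s -> (forall x, G (rho x) = D x) -> mptyp G (mrenp rho P) s.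
Proof.
  intros H Hc. destruct H as [D r E s Hr HE]. rewrite mrenp_lam. constructor; auto.
  subst r. eapply mrene_typ; [exact HE|]. apply ctx_ext_liftren; auto.
Qed.

Definition enttyp (G : nat -> ty) (en : mentry) (s : ty) : Prop :=
  match en with EVar y => G y = s | EProc P => mptyp G P s end.

Lemma ctx_ext_liftsub s G D sigma : (forall x, enttyp G (sigma x) (D x)) ->
  forall x, enttyp (ctx_ext s G) (liftsub (arity s) sigma x) (ctx_ext s D x).
Proof.
  intros H x. unfold liftsub. destruct (x <? arity s) eqn:E.
  - simpl. unfold ctx_ext. rewrite E. reflexivity.
  - unfold ctx_ext at 2. rewrite E. specialize (H (x - arity s)).
    destruct (sigma (x - arity s)) as [y|P]; simpl in *.
    + unfold ctx_ext. assert (E2 : (y + arity s <? arity s) = false) by (apply Nat.ltb_ge; lia).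
      rewrite E2. replace (y + arity s - arity s) with y by lia. auto.
    + eapply mrenp_typ; [exact H|]. intros z. unfold ctx_ext.
      assert (E2 : (z + arity s <? arity s) = false) by (apply Nat.ltb_ge; lia).
      rewrite E2. f_equal. lia.
Qed.

Lemma msube_typ : forall D E, metyp D E -> forall G sigma, (forall x, enttyp G (sigma x) (D x)) ->
  metyp G (msube sigma E).
Proof.
  cofix IH. intros D E H G sigma Hc.
  destruct H as [D|D n|D E br HE Hb|D x k a br Hk Ha Hb|D P s k a br HP Hk Ha Hb].
  - rewrite msube_bot; constructor.
  - rewrite msube_num; constructor.
  - rewrite msube_caseE; constructor; eauto.
  - rewrite msube_caseV. pose proof (Hc x) as Hx.
    destruct (sigma x) as [y|Q]; simpl in Hx.
    + constructor; [rewrite Hx; auto| |eauto].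
      intros j Hj. cbv beta. rewrite Hx. destruct (Ha j Hj) as [D' r E s Hr HE].
      rewrite msubp_lam. constructor; auto. subst r. eapply IH; [exact HE|]. apply ctx_ext_liftsub; auto.
    + apply mt_caseA with (s := D x); eauto.
      intros j Hj. cbv beta. destruct (Ha j Hj) as [D' r E s Hr HE].
      rewrite msubp_lam. constructor; auto. subst r. eapply IH; [exact HE|]. apply ctx_ext_liftsub; auto.
  - rewrite msube_caseA. apply mt_caseA with (s := s); eauto.
    + destruct HP as [D' r E s Hr HE]. rewrite msubp_lam. constructor; auto. subst r.
      eapply IH; [exact HE|]. apply ctx_ext_liftsub; auto.
    + intros j Hj. cbv beta. destruct (Ha j Hj) as [D' r E s' Hr HE].
      rewrite msubp_lam. constructor; auto. subst r. eapply IH; [exact HE|]. apply ctx_ext_liftsub; auto.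
Qed.

Lemma hstep_typ G E E2 : metyp G E -> hstep E E2 -> metyp G E2.
Proof.
  intros H S. destruct S as [br|n br|G0 br1 br2|x k a br1 br2|P k a br1 br2|r E0 k a br].
  - constructor.
  - inversion H as [| |G1 E1 br0 HE Hb| |]; subst; auto.
  - inversion H as [| |G1 E1 br0 HE Hb| |]; subst.
    inversion HE as [| |G2 E3 br3 HE3 Hb3| |]; subst.
    constructor; auto. intros i; constructor; auto.
  - inversion H as [| |G1 E1 br0 HE Hb| |]; subst.
    inversion HE as [| | |G2 x2 k2 a2 br3 Hk Ha Hb3|]; subst.
    constructor; auto. intros i; constructor; auto.
  - inversion H as [| |G1 E1 br0 HE Hb| |]; subst.
    inversion HE as [| | | |G2 P2 s2 k2 a2 br3 HP Hk Ha Hb3]; subst.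
    econstructor; eauto. intros i; constructor; auto.
  - inversion H as [| | | |G1 P1 s1 k1 a1 br1 HP Hk Ha Hb]; subst.
    inversion HP as [G2 r2 E3 s2 Hr HE]; subst.
    constructor; auto. eapply msube_typ; [exact HE|].
    intros x. unfold ctx_ext. destruct (x <? arity s1) eqn:Ex; simpl.
    + apply Ha. apply Nat.ltb_lt in Ex. lia.
    + reflexivity.
Qed.

Lemma hred_typ G E E2 : metyp G E -> hred E E2 -> metyp G E2.
Proof. intros H R; induction R; auto. apply IHR. eapply hstep_typ; eauto. Qed.

Lemma evals_typ : forall G E t, metyp G E -> evals E t -> etyp G t.
Proof.
  cofix IH. intros G E t HT H. destruct H as [E H|E n H|E H|E x k a br a' br' Hr Ha Hb].
  - constructor.
  - constructor.
  - constructor.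
  - pose proof (hred_typ _ _ _ HT Hr) as HT'.
    inversion HT' as [| | |G1 x1 k1 a1 br1 Hk Hat Hbt|]; subst.
    constructor; auto.
    + intros j Hj. pose proof (Hat j Hj) as Ht; pose proof (Ha j Hj) as Hx; revert Ht Hx.
      destruct (a j) as [r E2]; destruct (a' j) as [r' e2]; intros Ht Hx.
      inversion Ht as [G2 r0 E0 s Hrr HE]; subst. inversion Hx as [r3 E3 e3 He3]; subst.
      constructor; auto. eapply IH; eauto.
    + intros i. exact (IH _ _ _ (Hbt i) (Hb i)).
Qed.

(** * Totality of evaluation *)

Definition hnf_reachable_dec (E : mexp) : {X | hred E X /\ hnf X} + {forall X, hred E X -> ~ hnf X}.
Proof.
  destruct (excluded_middle_informative (exists X, hred E X /\ hnf X)) as [H|H].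
  - left. apply constructive_indefinite_description. exact H.
  - right. intros X HX HN. apply H. eauto.
Qed.

CoFixpoint readback (E : mexp) : nexp :=
  match hnf_reachable_dec E with
  | inleft (exist _ X _) =>
      match X with
      | MNum n => NNum n
      | MCaseV x k a br => NCase x k (fun j => readbackp (a j)) (fun i => readback (br i))
      | _ => NBot
      end
  | inright _ => NBot
  end
with readbackp (P : mproc) : nproc := match P with MLam r E => NLam r (readback E) end.

Lemma readback_unfold E : readback E =
  match hnf_reachable_dec E with
  | inleft (exist _ X _) =>
      match X with
      | MNum n => NNum n
      | MCaseV x k a br => NCase x k (fun j => readbackp (a j)) (fun i => readback (br i))
      | _ => NBot
      end
  | inright _ => NBot
  end.
Proof.
  rewrite (frob_ne_eq (readback E)) at 1. unfold frob_ne. cbn [readback].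
  destruct (hnf_reachable_dec E) as [[X ?]|?]; [destruct X|]; reflexivity.
Qed.

Lemma readbackp_lam r E : readbackp (MLam r E) = NLam r (readback E).
Proof. rewrite (frob_np_eq (readbackp _)); reflexivity. Qed.

Lemma readback_evals : forall E, evals E (readback E).
Proof.
  cofix IH. intros E. rewrite readback_unfold.
  destruct (hnf_reachable_dec E) as [[X [HX Hn]]|Hd].
  - destruct X; simpl in Hn; try contradiction.
    + apply ev_bot; auto.
    + apply ev_num; auto.
    + eapply ev_case; [exact HX| |].
      * intros j _. destruct (args j) as [r E0]. rewrite readbackp_lam. constructor. apply IH.
      * intros i. apply IH.
  - apply ev_div. intros E' HE'. apply hnf_or_step. exact (Hd E' HE').
Qed.

Lemma eval_evals E : evals E (eval E).
Proof. unfold eval. apply epsilon_spec. exists (readback E). apply readback_evals. Qed.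

(** * Typing of application, eta-expansion and the fixed-point chain *)

Definition napp_sub (r : nat) (q : nproc) : nat -> mentry :=
  fun k => if k <? r then EVar k
           else if k =? r then EProc (mrenp (fun j => j + r) (embp q)) else EVar (k - 1).

Lemma napp_eq r e q : napp (NLam (S r) e) q = NLam r (eval (msube (napp_sub r q) (embe e))).
Proof. reflexivity. Qed.

Lemma embp_typ G p s : ptyp G p s -> mptyp G (embp p) s.
Proof. intros H. destruct H as [G r e s Hr He]. rewrite embp_lam. constructor; auto. apply embe_typ; auto. Qed.

Lemma napp_sub_typ G r q s t : r = arity t -> ptyp G q s ->
  forall x, enttyp (ctx_ext t G) (napp_sub r q x) (ctx_ext (TArr s t) G x).
Proof.
  intros Hr Hq x. subst r. unfold napp_sub. nat_cases; simpl.
  - unfold ctx_ext. simpl. nat_cases; try lia.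
    replace (arity t - 0 - x) with (S (arity t - 1 - x)) by lia. reflexivity.
  - subst x. unfold ctx_ext. simpl. nat_cases; try lia.
    replace (arity t - 0 - arity t) with 0 by lia.
    eapply mrenp_typ; [apply embp_typ; exact Hq|]. intros z. unfold ctx_ext. nat_cases; try lia.
    f_equal; lia.
  - unfold ctx_ext. simpl. nat_cases; try lia. f_equal; lia.
Qed.

Lemma napp_typ G p q s t : ptyp G p (TArr s t) -> ptyp G q s -> ptyp G (napp p q) t.
Proof.
  intros Hp Hq. inversion Hp as [G' r e st Hr He]; subst. change (arity (TArr s t)) with (S (arity t)).
  rewrite napp_eq. constructor; auto. eapply evals_typ; [|apply eval_evals].
  eapply msube_typ; [apply embe_typ; exact He|]. apply napp_sub_typ; auto.
Qed.

Lemma etaargs_typ : forall s D, (forall j, j < arity s -> D (arity s - 1 - j) = argty s j) ->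
  forall j, j < arity s -> ptyp D (etaargs s j) (argty s j).
Proof.
  induction s as [|s1 IH1 s2 IH2]; intros D HD j Hj; simpl in Hj; [lia|].
  destruct j as [|j].
  - simpl. constructor; auto.
    assert (Hx : ctx_ext s1 D (arity s2 + arity s1) = s1).
    { unfold ctx_ext. nat_cases; try lia. replace (arity s2 + arity s1 - arity s1) with (arity s2) by lia.
      specialize (HD 0). simpl in HD. rewrite <- HD by lia. f_equal. lia. }
    constructor; try rewrite Hx; auto.
    + intros j Hj'. apply IH1; auto. intros j' Hj''. unfold ctx_ext. nat_cases; try lia.
      f_equal; lia.
    + intros i; constructor.
  - simpl. apply IH2; [|lia]. intros j' Hj'. specialize (HD (S j')). simpl in HD.
    rewrite <- HD by lia. f_equal; lia.
Qed.

Lemma eta_typ G s x : G x = s -> ptyp G (eta s x) s.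
Proof.
  intros Hx. unfold eta. constructor; auto.
  assert (Hy : ctx_ext s G (x + arity s) = s).
  { unfold ctx_ext. nat_cases; try lia. replace (x + arity s - arity s) with x by lia. auto. }
  constructor; try rewrite Hy; auto.
  - intros j Hj. apply etaargs_typ; auto. intros j' Hj'. unfold ctx_ext. nat_cases; try lia. f_equal; lia.
  - intros; constructor.
Qed.

Lemma lamcons_typ G p a b : ptyp (tcons a G) p b -> ptyp G (lamcons p) (TArr a b).
Proof.
  intros H. inversion H as [G' r e s Hr He]; subst. simpl. constructor; [simpl; lia|].
  replace (ctx_ext (TArr a b) G) with (ctx_ext b (tcons a G)); auto.
  apply functional_extensionality. intros x. unfold ctx_ext, tcons. simpl. nat_cases; try lia.
  - replace (arity b - 0 - x) with (S (arity b - 1 - x)) by lia. reflexivity.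
  - replace (x - arity b) with 0 by lia. replace (arity b - 0 - x) with 0 by lia. reflexivity.
  - destruct (x - arity b) eqn:Ex; [lia|]. f_equal. lia.
Qed.

Lemma Ychain_typ s : forall k G, ptyp G (Ychain s k) (TArr (TArr s s) s).
Proof.
  induction k as [|k IH]; intros G.
  - simpl. constructor; [reflexivity|constructor].
  - change (Ychain s (S k)) with (lamcons (napp (eta (TArr s s) 0) (napp (Ychain s k) (eta (TArr s s) 0)))).
    apply lamcons_typ. eapply napp_typ.
    + apply eta_typ. reflexivity.
    + eapply napp_typ; [apply IH|]. apply eta_typ; reflexivity.
Qed.

(** * Monotonicity of evaluation *)

CoInductive nle : nexp -> nexp -> Prop :=
| nl_bot e : nle NBot e
| nl_num n : nle (NNum n) (NNum n)
| nl_case x k a a' br br' : (forall j, j < k -> ple (a j) (a' j)) ->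
    (forall i, nle (br i) (br' i)) -> nle (NCase x k a br) (NCase x k a' br')
with ple : nproc -> nproc -> Prop :=
| pl_lam r e e' : nle e e' -> ple (NLam r e) (NLam r e').

CoInductive mle : mexp -> mexp -> Prop :=
| ml_bot E : mle MBot E
| ml_num n : mle (MNum n) (MNum n)
| ml_caseE G G' br br' : mle G G' -> (forall i, mle (br i) (br' i)) -> mle (MCaseE G br) (MCaseE G' br')
| ml_caseV x k a a' br br' : (forall j, j < k -> mple (a j) (a' j)) ->
    (forall i, mle (br i) (br' i)) -> mle (MCaseV x k a br) (MCaseV x k a' br')
| ml_caseA P P' k a a' br br' : mple P P' -> (forall j, j < k -> mple (a j) (a' j)) ->
    (forall i, mle (br i) (br' i)) -> mle (MCaseA P k a br) (MCaseA P' k a' br')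
with mple : mproc -> mproc -> Prop :=
| mpl_lam r E E' : mle E E' -> mple (MLam r E) (MLam r E').

Lemma nle_refl : forall e, nle e e.
Proof.
  cofix IH. intros e. destruct e as [|n|x k a br]; constructor.
  - intros j _. destruct (a j). constructor. apply IH.
  - intros i. apply IH.
Qed.
Lemma ple_refl p : ple p p.
Proof. destruct p; constructor; apply nle_refl. Qed.

Lemma nle_trans : forall e1 e2 e3, nle e1 e2 -> nle e2 e3 -> nle e1 e3.
Proof.
  cofix IH. intros e1 e2 e3 H1 H2. destruct H1 as [e|n|x k a a' br br' Ha Hb].
  - constructor.
  - exact H2.
  - inversion H2 as [|n|x2 k2 a2 a3 br2 br3 Ha2 Hb2]; subst. constructor.
    + intros j Hj. specialize (Ha j Hj). specialize (Ha2 j Hj).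
      destruct Ha as [r e e' He]. inversion Ha2 as [r2 e2 e3 He2]; subst.
      constructor. eapply IH; eauto.
    + intros i. eapply IH; eauto.
Qed.

Lemma embe_mono : forall e e', nle e e' -> mle (embe e) (embe e').
Proof.
  cofix IH. intros e e' H. destruct H as [e|n|x k a a' br br' Ha Hb].
  - rewrite embe_bot; constructor.
  - rewrite embe_num; constructor.
  - rewrite !embe_case. constructor.
    + intros j Hj. cbv beta. destruct (Ha j Hj) as [r e e' He]. rewrite !embp_lam. constructor. apply IH; auto.
    + intros i. apply IH; auto.
Qed.

Lemma embp_mono p p' : ple p p' -> mple (embp p) (embp p').
Proof. intros H; destruct H; rewrite !embp_lam; constructor; apply embe_mono; auto. Qed.

Lemma mrene_mono : forall E E' rho, mle E E' -> mle (mrene rho E) (mrene rho E').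
Proof.
  cofix IH. intros E E' rho H.
  destruct H as [E|n|G G' br br' HG Hb|x k a a' br br' Ha Hb|P P' k a a' br br' HP Ha Hb].
  - rewrite mrene_bot; constructor.
  - rewrite !mrene_num; constructor.
  - rewrite !mrene_caseE; constructor; auto.
  - rewrite !mrene_caseV; constructor; auto.
    intros j Hj. cbv beta. destruct (Ha j Hj) as [r E E' HE]. rewrite !mrenp_lam. constructor. apply IH; auto.
  - rewrite !mrene_caseA; constructor; auto.
    + destruct HP as [r E E' HE]. rewrite !mrenp_lam. constructor. apply IH; auto.
    + intros j Hj. cbv beta. destruct (Ha j Hj) as [r E E' HE]. rewrite !mrenp_lam. constructor. apply IH; auto.
Qed.

Lemma mrenp_mono P P' rho : mple P P' -> mple (mrenp rho P) (mrenp rho P').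
Proof. intros H; destruct H; rewrite !mrenp_lam; constructor; apply mrene_mono; auto. Qed.

Definition entle (a b : mentry) : Prop :=
  match a, b with EVar x, EVar y => x = y | EProc P, EProc Q => mple P Q | _, _ => False end.

Lemma liftsub_mono r s s' : (forall x, entle (s x) (s' x)) ->
  forall x, entle (liftsub r s x) (liftsub r s' x).
Proof.
  intros H x. unfold liftsub. destruct (x <? r); simpl; auto.
  specialize (H (x - r)). destruct (s (x - r)), (s' (x - r)); simpl in *; try contradiction.
  - lia.
  - apply mrenp_mono; auto.
Qed.

Lemma msube_mono : forall E E' s s', (forall x, entle (s x) (s' x)) -> mle E E' ->
  mle (msube s E) (msube s' E').
Proof.
  cofix IH. intros E E' s s' Hs H.
  destruct H as [E|n|G G' br br' HG Hb|x k a a' br br' Ha Hb|P P' k a a' br br' HP Ha Hb].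
  - rewrite msube_bot; constructor.
  - rewrite !msube_num; constructor.
  - rewrite !msube_caseE; constructor; auto.
  - rewrite !msube_caseV. pose proof (Hs x) as Hx.
    destruct (s x) as [y|Q], (s' x) as [y'|Q']; simpl in Hx; try contradiction.
    + subst y'. constructor; auto.
      intros j Hj. cbv beta. destruct (Ha j Hj) as [r E E' HE]. rewrite !msubp_lam. constructor.
      apply IH; auto. apply liftsub_mono; auto.
    + constructor; auto.
      intros j Hj. cbv beta. destruct (Ha j Hj) as [r E E' HE]. rewrite !msubp_lam. constructor.
      apply IH; auto. apply liftsub_mono; auto.
  - rewrite !msube_caseA; constructor; auto.
    + destruct HP as [r E E' HE]. rewrite !msubp_lam. constructor. apply IH; auto. apply liftsub_mono; auto.
    + intros j Hj. cbv beta. destruct (Ha j Hj) as [r E E' HE]. rewrite !msubp_lam. constructor.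
      apply IH; auto. apply liftsub_mono; auto.
Qed.

(* Typing is needed because [mle] ignores the arguments of an application beyond
   its arity, whereas a beta step whose arity does not match would read them. *)
Lemma hstep_simulation G E E' E2 : metyp G E -> mle E E' -> hstep E E2 ->
  exists E2', hred E' E2' /\ mle E2 E2'.
Proof.
  intros HT H S. destruct S as [br|n br|G0 br1 br2|x k a br1 br2|P k a br1 br2|r E0 k a br].
  - exists E'. split; [constructor|constructor].
  - inversion H as [| |G1 G' br0 br' HG Hb| |]; subst. inversion HG; subst.
    exists (br' n). split; auto. econstructor; [constructor|constructor].
  - inversion H as [| |G1 G' br0 br' HG Hb| |]; subst.
    inversion HG as [| |G2 G3 br3 br4 HG2 Hb2| |]; subst.
    eexists. split; [econstructor; [constructor|constructor]|].
    constructor; auto. intros i; constructor; auto.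
  - inversion H as [| |G1 G' br0 br' HG Hb| |]; subst.
    inversion HG as [| | |x2 k2 a2 a3 br3 br4 Ha2 Hb2|]; subst.
    eexists. split; [econstructor; [constructor|constructor]|].
    constructor; auto. intros i; constructor; auto.
  - inversion H as [| |G1 G' br0 br' HG Hb| |]; subst.
    inversion HG as [| | | |P2 P3 k2 a2 a3 br3 br4 HP Ha2 Hb2]; subst.
    eexists. split; [econstructor; [constructor|constructor]|].
    constructor; auto. intros i; constructor; auto.
  - inversion H as [| | | |P2 P3 k2 a2 a3 br3 br4 HP Ha2 Hb2]; subst.
    inversion HP as [r2 E1 E3 HE]; subst.
    inversion HT as [| | | |G1 P1 s1 k1 a1 br1 HP1 Hk Ha Hb]; subst.
    inversion HP1 as [G2 r3 E4 s2 Hr HE4]; subst.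
    eexists. split; [econstructor; [constructor|constructor]|].
    constructor; auto. apply msube_mono; auto.
    intros x. destruct (x <? arity s1) eqn:Ex; simpl; auto.
    apply Ha2. apply Nat.ltb_lt in Ex. lia.
Qed.

Lemma hred_simulation G E E' X : metyp G E -> mle E E' -> hred E X -> exists X', hred E' X' /\ mle X X'.
Proof.
  intros HT H R. revert E' H. induction R as [E|E1 E2 E3 S R IH]; intros E' H.
  - exists E'; split; auto; constructor.
  - destruct (hstep_simulation _ _ _ _ HT H S) as [E2' [R2 H2]].
    destruct (IH (hstep_typ _ _ _ HT S) _ H2) as [X' [R3 H3]].
    exists X'; split; auto. eapply hred_trans; eauto.
Qed.

Lemma evals_mono : forall G E E' t t', metyp G E -> mle E E' -> evals E t -> evals E' t' -> nle t t'.
Proof.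
  cofix IH. intros G E E' t t' HT H H1 H2.
  destruct H1 as [E H1|E n H1|E H1|E x k a br a1 br1 Hr Ha Hb].
  - constructor.
  - destruct (hred_simulation _ _ _ _ HT H H1) as [X' [R' HX]]. inversion HX; subst.
    destruct H2 as [E' H2|E' m H2|E' H2|E' x k a br a2 br2 Hr Ha Hb].
    + pose proof (hred_hnf_unique _ _ _ R' H2 I I); discriminate.
    + pose proof (hred_hnf_unique _ _ _ R' H2 I I) as HH. injection HH as ->. constructor.
    + exfalso; eapply hred_hnf_no_divergence; eauto. exact I.
    + pose proof (hred_hnf_unique _ _ _ R' Hr I I); discriminate.
  - constructor.
  - destruct (hred_simulation _ _ _ _ HT H Hr) as [X' [R' HX]].
    inversion HX as [| | |x2 k2 a2 a3 br2 br3 Ha2 Hb2|]; subst.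
    pose proof (hred_typ _ _ _ HT Hr) as HT'.
    inversion HT' as [| | |G1 x1 k1 a1' br1' Hk Hat Hbt|]; subst.
    destruct H2 as [E' H2|E' m H2|E' H2|E' x' k' a' br' a4 br4 Hr' Ha' Hb'].
    + pose proof (hred_hnf_unique _ _ _ R' H2 I I); discriminate.
    + pose proof (hred_hnf_unique _ _ _ R' H2 I I); discriminate.
    + exfalso; eapply hred_hnf_no_divergence; eauto. exact I.
    + pose proof (hred_hnf_unique _ _ _ R' Hr' I I) as HH. injection HH as <- <- <- <-.
      constructor.
      * intros j Hj. pose proof (Hat j Hj) as Ht. pose proof (Ha j Hj) as He1.
        pose proof (Ha' j Hj) as He2. pose proof (Ha2 j Hj) as Hl. revert Ht He1 He2 Hl.
        destruct (a j) as [r E1]; destruct (a3 j) as [r' E2]; destruct (a1 j) as [r1 e1];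
          destruct (a4 j) as [r2 e2]; intros Ht He1 He2 Hl.
        inversion Ht as [G2 r0 E0 s Hrr HE]; subst. inversion He1; subst.
        inversion He2; subst. inversion Hl; subst. constructor. eapply IH; eauto.
      * intros i. eapply IH; [exact (Hbt i)|exact (Hb2 i)|exact (Hb i)|exact (Hb' i)].
Qed.

Lemma napp_sub_mono r q q' : ple q q' -> forall x, entle (napp_sub r q x) (napp_sub r q' x).
Proof.
  intros H x. unfold napp_sub. destruct (x <? r); simpl; auto.
  destruct (x =? r); simpl; auto. apply mrenp_mono. apply embp_mono; auto.
Qed.

Lemma napp_mono G p q p' q' s t : ptyp G p (TArr s t) -> ptyp G q s -> ple p p' -> ple q q' ->
  ple (napp p q) (napp p' q').
Proof.
  intros Hp Hq H1 H2. inversion Hp as [G' r e st Hr He]; subst.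
  inversion H1 as [r1 e1 e' He']; subst.
  change (arity (TArr s t)) with (S (arity t)). rewrite !napp_eq. constructor.
  eapply evals_mono; [| |apply eval_evals|apply eval_evals].
  - eapply msube_typ; [apply embe_typ; exact He|]. apply napp_sub_typ; auto.
  - apply msube_mono; [apply napp_sub_mono; auto|]. apply embe_mono; auto.
Qed.

Lemma lamcons_mono p p' : ple p p' -> ple (lamcons p) (lamcons p').
Proof. intros H; destruct H; simpl; constructor; auto. Qed.

Lemma Ychain_shape s k : exists e, Ychain s k = NLam (S (arity s)) e.
Proof. destruct k; simpl; eauto. Qed.

Lemma Ychain_mono s : forall k, ple (Ychain s k) (Ychain s (S k)).
Proof.
  induction k as [|k IH].
  - destruct (Ychain_shape s 1) as [e He]. rewrite He. simpl. constructor. constructor.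
  - change (ple (lamcons (napp (eta (TArr s s) 0) (napp (Ychain s k) (eta (TArr s s) 0))))
                (lamcons (napp (eta (TArr s s) 0) (napp (Ychain s (S k)) (eta (TArr s s) 0))))).
    apply lamcons_mono. set (G := tcons (TArr s s) (fun _ => TN)).
    eapply (napp_mono G).
    + apply eta_typ. reflexivity.
    + eapply napp_typ; [apply Ychain_typ|]. apply eta_typ; reflexivity.
    + apply ple_refl.
    + eapply (napp_mono G); [apply Ychain_typ| apply eta_typ; reflexivity| exact IH| apply ple_refl].
Qed.

(** * Limits of increasing chains *)

Definition argof (j : nat) (e : nexp) : nproc := match e with NCase _ _ a _ => a j | _ => NLam 0 NBot end.
Definition brof (i : nat) (e : nexp) : nexp := match e with NCase _ _ _ br => br i | _ => NBot end.
Definition bodyof (p : nproc) : nexp := match p with NLam _ e => e end.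

Definition nonbot_dec (c : nat -> nexp) : {k | c k <> NBot} + {forall k, c k = NBot}.
Proof.
  destruct (excluded_middle_informative (exists k, c k <> NBot)) as [H|H].
  - left. apply constructive_indefinite_description. exact H.
  - right. intros k. destruct (c k) eqn:E; auto; exfalso; apply H; exists k; rewrite E; discriminate.
Qed.

(* The limit takes its top constructor from the first non-bottom member of the
   chain; since the chain increases, that constructor is the same further on. *)
CoFixpoint lime (c : nat -> nexp) : nexp :=
  match nonbot_dec c with
  | inleft (exist _ k1 _) =>
      match c k1 with
      | NBot => NBot
      | NNum n => NNum n
      | NCase x kk a br => NCase x kk (fun j => limp (fun m => argof j (c (k1 + m))))
                                 (fun i => lime (fun m => brof i (c (k1 + m))))
      end
  | inright _ => NBot
  end
with limp (c : nat -> nproc) : nproc :=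
  match c 0 with NLam r _ => NLam r (lime (fun m => bodyof (c m))) end.

Lemma lime_unfold c : lime c =
  match nonbot_dec c with
  | inleft (exist _ k1 _) =>
      match c k1 with
      | NBot => NBot
      | NNum n => NNum n
      | NCase x kk a br => NCase x kk (fun j => limp (fun m => argof j (c (k1 + m))))
                                 (fun i => lime (fun m => brof i (c (k1 + m))))
      end
  | inright _ => NBot
  end.
Proof.
  rewrite (frob_ne_eq (lime c)) at 1. unfold frob_ne. cbn [lime].
  destruct (nonbot_dec c) as [[k1 ?]|?]; [destruct (c k1)|]; reflexivity.
Qed.

Lemma limp_unfold c : limp c = match c 0 with NLam r _ => NLam r (lime (fun m => bodyof (c m))) end.
Proof. rewrite (frob_np_eq (limp c)) at 1. unfold frob_np. cbn [limp]. destruct (c 0); reflexivity. Qed.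

Definition echain (c : nat -> nexp) := forall k, nle (c k) (c (S k)).
Definition pchain (c : nat -> nproc) := forall k, ple (c k) (c (S k)).

Lemma echain_le_add c : echain c -> forall k m, nle (c k) (c (k + m)).
Proof.
  intros H k m. induction m as [|m IH].
  - rewrite Nat.add_0_r. apply nle_refl.
  - eapply nle_trans; [exact IH|]. replace (k + S m) with (S (k + m)) by lia. apply H.
Qed.

Lemma pchain_arity c : pchain c -> forall k, exists e, c k = NLam (match c 0 with NLam r _ => r end) e.
Proof.
  intros H k. induction k as [|k IH].
  - destruct (c 0); eauto.
  - destruct IH as [e He]. specialize (H k). rewrite He in H. inversion H; subst. eauto.
Qed.

Section CaseChain.
Variables (c : nat -> nexp) (k1 x kk : nat) (a : nat -> nproc) (br : nat -> nexp).
Hypotheses (Hc : echain c) (Ec : c k1 = NCase x kk a br).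

Lemma echain_case_tail m : exists a' br', c (k1 + m) = NCase x kk a' br'.
Proof.
  pose proof (echain_le_add c Hc k1 m) as Hle. rewrite Ec in Hle. inversion Hle; subst; eauto.
Qed.

Lemma echain_case_branch i : echain (fun m => brof i (c (k1 + m))).
Proof.
  intros m. destruct (echain_case_tail m) as [a1 [b1 E1]], (echain_case_tail (S m)) as [a2 [b2 E2]].
  pose proof (Hc (k1 + m)) as Hl. rewrite <- Nat.add_succ_r, E1, E2 in Hl.
  cbv beta. rewrite E1, E2. cbn. inversion Hl; subst; auto.
Qed.

Lemma echain_case_arg j : j < kk -> pchain (fun m => argof j (c (k1 + m))).
Proof.
  intros Hj m. destruct (echain_case_tail m) as [a1 [b1 E1]], (echain_case_tail (S m)) as [a2 [b2 E2]].
  pose proof (Hc (k1 + m)) as Hl. rewrite <- Nat.add_succ_r, E1, E2 in Hl.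
  cbv beta. rewrite E1, E2. cbn. inversion Hl; subst; auto.
Qed.

End CaseChain.

Lemma pchain_body c : pchain c -> echain (fun m => bodyof (c m)).
Proof. intros Hc m. pose proof (Hc m) as Hl. inversion Hl; auto. Qed.

Lemma labels_of_limit : forall pi,
  (forall c, echain c -> exists k0, forall k, k0 <= k -> labe pi (c k) = labe pi (lime c)) /\
  (forall c, pchain c -> exists k0, forall k, k0 <= k -> labp pi (c k) = labp pi (limp c)).
Proof.
  induction pi as [|st pi IH]; split.
  - intros c Hc. rewrite lime_unfold. destruct (nonbot_dec c) as [[k1 Hk1]|Hall].
    + exists k1. intros k Hk. pose proof (echain_le_add c Hc k1 (k - k1)) as Hle.
      replace (k1 + (k - k1)) with k in Hle by lia.
      destruct (c k1) as [|n|x kk a br]; [congruence| |]; inversion Hle; subst; reflexivity.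
    + exists 0. intros k _. rewrite Hall. reflexivity.
  - intros c Hc. exists 0. intros k _. rewrite limp_unfold.
    destruct (pchain_arity c Hc k) as [e He]. rewrite He. destruct (c 0); reflexivity.
  - intros c Hc. rewrite lime_unfold. destruct (nonbot_dec c) as [[k1 Hk1]|Hall].
    2:{ exists 0. intros k _. rewrite Hall. destruct st; reflexivity. }
    destruct (c k1) as [|n|x kk a br] eqn:Ec; [congruence| |].
    + exists k1. intros k Hk. pose proof (echain_le_add c Hc k1 (k - k1)) as Hle.
      replace (k1 + (k - k1)) with k in Hle by lia. rewrite Ec in Hle. inversion Hle; subst.
      destruct st; reflexivity.
    + destruct st as [i|j|]; [| |exists 0; intros; destruct (c k); reflexivity].
      * destruct (proj1 IH _ (echain_case_branch c k1 x kk a br Hc Ec i)) as [k0 Hk0].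
        exists (k1 + k0). intros k Hk. specialize (Hk0 (k - k1) ltac:(lia)).
        replace (k1 + (k - k1)) with k in Hk0 by lia.
        destruct (echain_case_tail c k1 x kk a br Hc Ec (k - k1)) as [a1 [b1 E1]].
        replace (k1 + (k - k1)) with k in E1 by lia. rewrite E1 in Hk0 |- *. exact Hk0.
      * cbn [labe]. destruct (j <? kk) eqn:Ej.
        2:{ exists k1. intros k Hk.
            destruct (echain_case_tail c k1 x kk a br Hc Ec (k - k1)) as [a1 [b1 E1]].
            replace (k1 + (k - k1)) with k in E1 by lia. rewrite E1. cbn [labe]. rewrite Ej. reflexivity. }
        pose proof (proj1 (Nat.ltb_lt j kk) Ej) as Hj.
        destruct (proj2 IH _ (echain_case_arg c k1 x kk a br Hc Ec j Hj)) as [k0 Hk0].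
        exists (k1 + k0). intros k Hk. specialize (Hk0 (k - k1) ltac:(lia)).
        destruct (echain_case_tail c k1 x kk a br Hc Ec (k - k1)) as [a1 [b1 E1]].
        replace (k1 + (k - k1)) with k in Hk0, E1 by lia. rewrite E1 in Hk0 |- *.
        cbn [labe]. rewrite Ej. exact Hk0.
  - intros c Hc. destruct st as [i|j|].
    + exists 0. intros k _. rewrite limp_unfold. destruct (c k), (c 0); reflexivity.
    + exists 0. intros k _. rewrite limp_unfold. destruct (c k), (c 0); reflexivity.
    + destruct (proj1 IH _ (pchain_body c Hc)) as [k0 Hk0]. exists k0. intros k Hk.
      rewrite limp_unfold. specialize (Hk0 k Hk).
      destruct (c k) eqn:Ek, (c 0); cbn in *. exact Hk0.
Qed.

(** * Arity of interpretations *)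

Lemma Yint_arity s : exists e, Yint s = NLam (S (arity s)) e.
Proof.
  assert (Hs : is_chain_sup (Ychain s) (Yint s)).
  { unfold Yint. apply epsilon_spec. exists (limp (Ychain s)).
    intros pi. apply (proj2 (labels_of_limit pi)). intros k. apply Ychain_mono. }
  destruct (Hs nil) as [k0 Hk0]. specialize (Hk0 k0 (le_n _)).
  destruct (Ychain_shape s k0) as [e He]. rewrite He in Hk0.
  destruct (Yint s) as [r e']. simpl in Hk0. injection Hk0 as ->. eauto.
Qed.

Lemma interp_arity : forall G M s, has_type G M s -> exists e, interp G M = NLam (arity s) e.
Proof.
  intros G M s H. induction H; simpl; eauto.
  - apply nth_error_nth with (d := TN) in H. rewrite H. unfold eta. eauto.
  - apply Yint_arity.
  - destruct IHhas_type as [e He]. rewrite He. simpl. eauto.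
  - destruct IHhas_type1 as [e He]. rewrite He. simpl. eauto.
Qed.

(** * Arithmetic operations and ifzero *)

Ltac ren_sub_tac := let x := fresh "x" in intros x; cbv beta; unfold liftren; nat_cases;
  try lia; try (f_equal; lia).

Lemma napp_unary_case m body :
  (forall n, body n = NBot \/ exists v, body n = NNum v) ->
  pbisim (napp (NLam 1 (NCase 0 0 noargs body)) (NLam 0 m)) (rplp body (NLam 0 m)).
Proof.
  intros Hb. unfold napp, rplp. cbv beta iota. constructor.
  eapply nbisim_trans; [apply eval_bisim_evals|].
  - rewrite embe_case, msube_caseV. cbn -[mrenp embp msube eval].
    rewrite embp_lam, mrenp_lam. eapply evals_hstep_back; [constructor|].
    apply evals_case_nfrel with (v := nren (fun x => x) m) (g := body).
    + apply nfrel_subst_ren. apply nbisim_refl. ren_sub_tac.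
    + intros n. destruct (Hb n) as [E|[v E]]; rewrite E.
      * rewrite embe_bot, msube_bot. apply ev_bot; constructor.
      * rewrite embe_num, msube_num. apply ev_num; constructor.
  - apply rple_cong. apply nren_id_bisim; auto. intros; apply nbisim_refl.
Qed.

(* The leaf replacements reached after feeding the test, the then- and the
   else-argument to [[ifzero]]; the renamings by 2, 1, 0 account for the binders
   that remain. *)
Definition ifz_br_test : nat -> nexp := fun i => match i with
  | 0 => NCase 1 0 noargs (fun j => NNum j) | S _ => NCase 0 0 noargs (fun j => NNum j) end.
Definition ifz_br_then (d : nexp) : nat -> nexp := fun i => match i with
  | 0 => rple (fun j => NNum j) (nren (fun x => x + 1) d) | S _ => NCase 0 0 noargs (fun j => NNum j) end.
Definition ifz_br_else (d e : nexp) : nat -> nexp := fun i => match i with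
  | 0 => nren (fun x => x) d | S _ => rple (fun j => NNum j) (nren (fun x => x) e) end.

Definition ifz_nsp : nproc := interp nil tifz.

Lemma case_numerals_branches x k au bu : nbisim (NCase x k au bu) (NCase x k noargs (fun j => NNum j)) ->
  forall i, bu i = NNum i.
Proof. intros H i. inversion H as [| |x2 k2 a2 a3 b2 b3 Ha Hb]; subst. specialize (Hb i).
  inversion Hb; auto. Qed.

Lemma napp_ifz_test m : exists t1, napp ifz_nsp (NLam 0 m) = NLam 2 t1 /\
  nbisim t1 (rple ifz_br_test (nren (fun x => x + 2) m)).
Proof.
  eexists; split; [unfold napp, ifz_nsp; cbn [interp]; cbv beta iota; reflexivity|].
  apply eval_bisim_evals.
  rewrite embe_case, msube_caseV. cbn -[mrenp embp msube eval embe].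
  rewrite embp_lam, mrenp_lam. eapply evals_hstep_back; [constructor|].
  apply evals_case_nfrel.
  - apply nfrel_subst_ren. apply nbisim_refl. ren_sub_tac.
  - intros [|n]; simpl.
    + rewrite embe_case, msube_caseV. simpl. eapply ev_case; [constructor| intros; lia|].
      intros i; cbv beta; rewrite embe_num, msube_num. apply ev_num; constructor.
    + rewrite embe_case, msube_caseV. simpl. eapply ev_case; [constructor| intros; lia|].
      intros i; cbv beta; rewrite embe_num, msube_num. apply ev_num; constructor.
Qed.

Lemma napp_ifz_then m t1 d : nbisim t1 (rple ifz_br_test (nren (fun x => x + 2) m)) ->
  exists t2, napp (NLam 2 t1) (NLam 0 d) = NLam 1 t2 /\
  nbisim t2 (rple (ifz_br_then d) (nren (fun x => x + 1) m)).
Proof.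
  intros H. eexists; split; [unfold napp; cbv beta iota; reflexivity|].
  apply eval_bisim_evals. eapply evals_subst_rple; [| |exact H].
  - ren_sub_tac.
  - intros [|n] u' Hu; simpl in Hu.
    + inversion Hu as [| |x2 k2 au a2 bu b2 Ha Hb]; subst.
      pose proof (case_numerals_branches _ _ _ _ Hu) as Hn.
      rewrite embe_case, msube_caseV. cbn -[mrenp embp msube eval embe].
      rewrite embp_lam, mrenp_lam. eapply evals_hstep_back; [constructor|].
      apply evals_case_nfrel.
      * apply nfrel_subst_ren. apply nbisim_refl. ren_sub_tac.
      * intros i; cbv beta; rewrite Hn, embe_num, msube_num. apply ev_num; constructor.
    + inversion Hu as [| |x2 k2 au a2 bu b2 Ha Hb]; subst.
      pose proof (case_numerals_branches _ _ _ _ Hu) as Hn.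
      rewrite embe_case, msube_caseV. simpl. eapply ev_case; [constructor| intros; lia|].
      intros i; cbv beta; rewrite Hn, embe_num, msube_num. apply ev_num; constructor.
Qed.

Lemma napp_ifz_else m t2 d e : nbisim t2 (rple (ifz_br_then d) (nren (fun x => x + 1) m)) ->
  exists t3, napp (NLam 1 t2) (NLam 0 e) = NLam 0 t3 /\
  nbisim t3 (rple (ifz_br_else d e) (nren (fun x => x) m)).
Proof.
  intros H. eexists; split; [unfold napp; cbv beta iota; reflexivity|].
  apply eval_bisim_evals. eapply evals_subst_rple; [| |exact H].
  - ren_sub_tac.
  - intros [|n] u' Hu; simpl in Hu.
    + apply nfrel_evals. eapply nfrel_subst.
      * eapply nbisim_trans; [exact Hu| apply rple_numerals_bisim].
      * ren_sub_tac.
    + inversion Hu as [| |x2 k2 au a2 bu b2 Ha Hb]; subst.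
      pose proof (case_numerals_branches _ _ _ _ Hu) as Hn.
      rewrite embe_case, msube_caseV. cbn -[mrenp embp msube eval embe].
      rewrite embp_lam, mrenp_lam. eapply evals_hstep_back; [constructor|].
      apply evals_case_nfrel.
      * apply nfrel_subst_ren. apply nbisim_refl. ren_sub_tac.
      * intros i; cbv beta; rewrite Hn, embe_num, msube_num. apply ev_num; constructor.
Qed.

Lemma napp_ifz m d e d0 e0 : nbisim d d0 -> nbisim e e0 ->
  pbisim (napp (napp (napp ifz_nsp (NLam 0 m)) (NLam 0 d)) (NLam 0 e))
         (rplp (fun i => match i with 0 => d0 | S _ => e0 end) (NLam 0 m)).
Proof.
  intros Hd He.
  destruct (napp_ifz_test m) as [t1 [-> B1]].
  destruct (napp_ifz_then _ _ d B1) as [t2 [-> B2]].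
  destruct (napp_ifz_else _ _ _ e B2) as [t3 [-> B3]].
  constructor. eapply nbisim_trans; [exact B3|].
  apply rple_cong; [apply nren_id_bisim; auto|].
  intros [|i]; cbn.
  - eapply nbisim_trans; [apply nren_id_bisim; auto|exact Hd].
  - eapply nbisim_trans; [apply rple_numerals_bisim|].
    eapply nbisim_trans; [apply nren_id_bisim; auto|exact He].
Qed.

Lemma interp_ground G M : has_type G M TN -> exists m, interp G M = NLam 0 m.
Proof. exact (interp_arity G M TN). Qed.

Theorem proposition3p5 :
  (forall (G : list ty) (M : term), has_type G M TN ->
     (forall f : nat -> option nat,
        pbisim (interp G (tapp (tC f) M)) (rplp (fval f) (interp G M)))
     /\ pbisim (interp G (tapp tsuc M)) (rplp (fun i => NNum (S i)) (interp G M))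
     /\ pbisim (interp G (tapp tpre M))
               (rplp (fun i => match i with 0 => NNum 0 | S j => NNum j end) (interp G M)))
  /\
  (forall (G : list ty) (M N P : term) (d e : nexp),
     has_type G M TN -> has_type G N TN -> has_type G P TN ->
     pbisim (interp G N) (NLam 0 d) -> pbisim (interp G P) (NLam 0 e) ->
     pbisim (interp G (tapp (tapp (tapp tifz M) N) P))
            (rplp (fun i => match i with 0 => d | S _ => e end) (interp G M))).
Proof.
  split.
  - intros G M HM. destruct (interp_ground _ _ HM) as [m Hm].
    split; [intros f|split]; cbn [interp]; rewrite Hm; apply napp_unary_case;
      intros [|n]; unfold fval; try destruct (f _); eauto.
  - intros G M N P d e HM HN HP Hd He.
    destruct (interp_ground _ _ HM) as [m Hm].
    destruct (interp_ground _ _ HN) as [d' Hd'].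
    destruct (interp_ground _ _ HP) as [e' He'].
    rewrite Hd' in Hd. inversion Hd as [r d1 d2 Hdd]; subst.
    rewrite He' in He. inversion He as [r e1 e2 Hee]; subst.
    cbn [interp]. rewrite Hm, Hd', He'. exact (napp_ifz m d' e' d e Hdd Hee).
Qed.
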